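(* For an index $i\geq k$ (and $i<s$), the following hold: if $i<s-2$, then $\tilde\Lambda$ has no order-$i$ seeds; if $i=s-2$, then the only order-$i$ seed of $\tilde\Lambda$ is $\lambda_s+1$; if $i=s-1$, then the only order-$i$ seeds of $\tilde\Lambda$ are $\lambda_s+1$ and $\lambda_s+2$.
   Context: A numerical semigroup is a subset $\Lambda\subseteq\mathbb{N}_0$ containing $0$, closed under addition, with finite complement; its genus $g$ is the number of gaps (elements of $\mathbb{N}_0\setminus\Lambda$). Write $\Lambda=\{\lambda_i\}_{i\geq 0}$ with $0=\lambda_0<\lambda_1<\lambda_2<\cdots$; let $k$ be the smallest index with $\lambda_i=i+g$ for all $i\geq k$, and $c=\lambda_k=k+g$ the conductor. A generator of a numerical semigroup is a non-zero element that is not the sum of two non-zero elements of it. Fix an element $\lambda_s$ with $s\geq k$ that is a generator of $\Lambda$ (an order-zero seed), and let $\tilde\Lambda=\Lambda\setminus\{\lambda_s\}$, a numerical semigroup of genus $g+1$ with elements $\tilde\lambda_i=\lambda_i$ for $i<s$, $\tilde\lambda_i=\lambda_{i+1}$ for $i\geq s$, and conductor $\lambda_s+1$. For $0\leq i<s$, an order-$i$ seed of $\tilde\Lambda$ is an element $\lambda_t$ with $t>s$ such that $\lambda_t+\lambda_i$ is a generator of $\tilde\Lambda_i=\Lambda\setminus\{\lambda_1,\dots,\lambda_i,\lambda_s\}$. *)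

From mathcomp Require Import all_boot.
Set Implicit Arguments. Unset Strict Implicit. Unset Printing Implicit Defensive.

Definition numerical_semigroup (L : pred nat) : Prop :=
  [/\ L 0, (forall a b, L a -> L b -> L (a + b)) & exists N, forall n, N <= n -> L n].

Definition enumerates (L : pred nat) (lam : nat -> nat) : Prop :=
  (forall i, lam i < lam i.+1) /\ (forall n, L n <-> exists i, lam i = n).

Definition genus (L : pred nat) (g : nat) : Prop :=
  exists N, (forall n, N <= n -> L n) /\ \sum_(n < N) (~~ L n) = g.

Definition conductor_index (lam : nat -> nat) (g k : nat) : Prop :=
  (forall i, k <= i -> lam i = i + g) /\
  (forall k', (forall i, k' <= i -> lam i = i + g) -> k <= k').

Definition generator (L : pred nat) (x : nat) : Prop :=
  [/\ L x, x != 0 & ~ exists a b, [/\ 0 < a, 0 < b, L a, L b & a + b = x]].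

Definition tildeL (L : pred nat) (lam : nat -> nat) (s i : nat) : pred nat :=
  fun n => [&& L n, n != lam s & ~~ has (fun j => n == lam j) (iota 1 i)].

Definition order_seed (L : pred nat) (lam : nat -> nat) (s i x : nat) : Prop :=
  exists t, [/\ s < t, x = lam t & generator (tildeL L lam s i) (x + lam i)].

(* Since [k <= i], [lam j = j + g] for [j >= i], so removing [lam 1, ...,
   lam i] and [lam s] from [Λ] leaves [0] together with the ray
   [n >= m := i + 1 + g] punctured at [p := s + g].  In a punctured ray [y]
   is a generator exactly when every splitting [y = a + (y - a)] with both
   parts [>= m] uses [p]; once [y >= 2m + 2] one of the splittings at [a = m]
   and [a = m + 1] avoids [p].  So [x + lam i] can be a generator only for
   [x <= lam s + 2], and the remaining candidates are checked directly. *)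

From mathcomp Require Import all_boot zify.

Set Implicit Arguments.
Unset Strict Implicit.
Unset Printing Implicit Defensive.

Definition punctured_ray (m p : nat) : pred nat :=
  fun n => (n == 0) || (m <= n) && (n != p).

Lemma eq_generator (T1 T2 : pred nat) (y : nat) :
  T1 =1 T2 -> generator T1 y <-> generator T2 y.
Proof.
move=> eqT; rewrite /generator eqT.
split=> -[Ty y0 nsum]; split=> // -[a [b [a0 b0 Ta Tb ab]]];
  by apply: nsum; exists a, b; rewrite ?eqT -?eqT in Ta Tb *.
Qed.

Lemma generator_punctured_rayP (m p y : nat) : 0 < m ->
  generator (punctured_ray m p) y <->
  [/\ m <= y, y != p & forall a, m <= a <= y - m -> (a == p) || (y - a == p)].
Proof.
move=> m0; rewrite /generator /punctured_ray; split.
- move=> -[Ty y0 nsum]; split; [lia | lia | move=> a ay].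
  apply/negPn/negP=> off_p; apply: nsum.
  by exists a, (y - a); split; lia.
- move=> [my yp nsum]; split; [lia | lia | move=> -[a [b [a0 b0 Ta Tb ab]]]].
  by have := nsum a; rewrite -ab addKn; lia.
Qed.

Lemma generator_punctured_ray_lt (m p y : nat) : 0 < m ->
  generator (punctured_ray m p) y -> y < m.*2.+2.
Proof.
move=> m0 /(generator_punctured_rayP _ _ m0) [my yp nsum].
by have := nsum m; have := nsum m.+1; lia.
Qed.

Lemma enumerates_homo (L : pred nat) (lam : nat -> nat) :
  enumerates L lam -> {homo lam : a b / a < b}.
Proof. by move=> [lt_lam _]; apply: homo_ltn lt_lam => ???; apply: ltn_trans. Qed.

Lemma enumerates0 (L : pred nat) (lam : nat -> nat) :
  enumerates L lam -> L 0 -> lam 0 = 0.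
Proof.
move=> EN /(proj2 EN) [j lamj0].
by case: j lamj0 => // j; have := enumerates_homo EN (ltn0Sn j); lia.
Qed.

Section Seeds.

Variables (L : pred nat) (lam : nat -> nat) (g k s i : nat).
Hypotheses (NS : numerical_semigroup L) (EN : enumerates L lam)
  (CI : conductor_index lam g k) (k_le_i : k <= i) (i_lt_s : i < s).

Let lam_cond n : k <= n -> lam n = n + g. Proof. exact: CI.1. Qed.

Lemma tildeL_punctured_ray :
  tildeL L lam s i =1 punctured_ray (i.+1 + g) (s + g).
Proof.
have memL := proj2 EN; have lt_lam := enumerates_homo EN.
have L0 : L 0 by case: NS.
have lam0 : lam 0 = 0 := enumerates0 EN L0.
have lami : lam i = i + g by apply: lam_cond.
move=> n; rewrite /tildeL /punctured_ray lam_cond; last by lia.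
apply/idP/idP.
- move=> /and3P[/memL [j <-] ns /hasPn nlow].
  case: j ns nlow => [|j] ns nlow; first by rewrite lam0.
  case: (leqP j.+1 i) => ji.
    by have /negP[] := nlow j.+1 ltac:(rewrite mem_iota; lia).
  by rewrite lam_cond in ns *; lia.
- case/orP=> [/eqP-> | /andP[mn np]].
  + rewrite L0 /=; apply/andP; split; first lia.
    apply/hasPn=> j; rewrite mem_iota => /andP[j1 _].
    by have := lt_lam 0 j j1; lia.
  + have Ln : L n by apply/memL; exists (n - g); rewrite lam_cond; lia.
    rewrite Ln np /=; apply/hasPn=> j; rewrite mem_iota => /andP[_ ji].
    by case: (ltngtP j i) => [/lt_lam | | ->]; lia.
Qed.

Lemma order_seedE (x : nat) :
  order_seed L lam s i x <->
  s + g < x /\ generator (punctured_ray (i.+1 + g) (s + g)) (x + (i + g)).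
Proof.
have lami : lam i = i + g by apply: lam_cond.
rewrite /order_seed lami -(eq_generator _ tildeL_punctured_ray).
split=> [[t [st -> gen]] | [sx gen]].
  by rewrite lam_cond in gen *; first split => //; lia.
by exists (x - g); rewrite lam_cond; first split => //; lia.
Qed.

End Seeds.

Theorem lemma3 (L : pred nat) (lam : nat -> nat) (g k s i : nat) :
  numerical_semigroup L ->
  enumerates L lam ->
  genus L g ->
  conductor_index lam g k ->
  k <= s ->
  generator L (lam s) ->
  k <= i -> i < s ->
  [/\ (i.+2 < s -> forall x, ~ order_seed L lam s i x),
      (i.+2 = s -> forall x, order_seed L lam s i x <-> x = lam s + 1)
    & (i.+1 = s -> forall x, order_seed L lam s i x <-> (x = lam s + 1 \/ x = lam s + 2))].
Proof.
move=> NS EN _ CI _ _ k_le_i i_lt_s.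
have lams : lam s = s + g by apply: CI.1; lia.
have m0 : 0 < i.+1 + g by [].
have seedE := order_seedE NS EN CI k_le_i i_lt_s.
have small x := @generator_punctured_ray_lt _ (s + g) (x + (i + g)) m0.
have genP x := @generator_punctured_rayP _ (s + g) (x + (i + g)) m0.
rewrite lams; split=> hs x; rewrite seedE.
- by move=> [sx /small]; lia.
- split=> [[sx /small] | ->]; first lia.
  split; first lia.
  by apply/genP; split=> [||a]; lia.
- split=> [[sx /small] | hx]; first lia.
  split; first lia.
  by apply/genP; split=> [||a]; lia.
Qed.
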